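(* Let $p\ge 1$, let $\alpha\in[0,1]$ and let $g\in\mathbb{R}^p$ with $g\neq 0$. Let $m$ be an index with $|g_m|=\max_d|g_d|$, and let $I_{12}$ be the $p\times p$ diagonal matrix with $(I_{12})_{dd}=1$ if $|g_d|\ge \alpha|g_m|$ and $(I_{12})_{dd}=0$ otherwise. Let $p_1:=\sum_{d=1}^p (I_{12})_{dd}$ (so $1\le p_1\le p$), let $$\Delta x_{12}:=-I_{12}g\left(\frac{\alpha}{\|I_{12}g\|_1}+\frac{1-\alpha}{\|I_{12}g\|_2}\right),$$ and let $h_\alpha(v):=\alpha\|v\|_1+(1-\alpha)\|v\|_2^2$. Then $$0.61<1-\alpha(1-\alpha)(2-\alpha)\left(1-\frac 1{p_1}\right)\le h_\alpha(\Delta x_{12})\le 1+\alpha(1-\alpha)(\sqrt{p_1}-1)\le 1+\frac{\sqrt{p_1}-1}{4}.$$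
   Context: $\Delta x_{12}$ is the (non-scaled) elastic gradient descent update direction; $p_1$ is the number of coordinates updated. *)

From mathcomp Require Import all_boot all_order all_algebra.
From mathcomp Require Import reals.
Set Implicit Arguments. Unset Strict Implicit. Unset Printing Implicit Defensive.
Import Order.TTheory GRing.Theory Num.Theory.
Local Open Scope ring_scope.

Definition norm1 {R : realType} {p : nat} (v : 'cV[R]_p) : R :=
  \sum_(i < p) `|v i 0|.
Definition norm2 {R : realType} {p : nat} (v : 'cV[R]_p) : R :=
  Num.sqrt (\sum_(i < p) (v i 0) ^+ 2).

Definition I12 {R : realType} {p : nat} (alpha : R) (g : 'cV[R]_p) (m : 'I_p)
  : 'M[R]_p :=
  diag_mx (\row_(d < p) (if alpha * `|g m 0| <= `|g d 0| then 1 else 0)).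

Definition p1 {R : realType} {p : nat} (alpha : R) (g : 'cV[R]_p) (m : 'I_p) : R :=
  \sum_(d < p) I12 alpha g m d d.

Definition dx12 {R : realType} {p : nat} (alpha : R) (g : 'cV[R]_p) (m : 'I_p)
  : 'cV[R]_p :=
  let v := I12 alpha g m *m g in
  - ((alpha / norm1 v + (1 - alpha) / norm2 v) *: v).

Definition h_alpha {R : realType} {p : nat} (alpha : R) (v : 'cV[R]_p) : R :=
  alpha * norm1 v + (1 - alpha) * (norm2 v) ^+ 2.

(* With v = I12 g, the step dx12 is a nonnegative multiple of -v, so h_alpha (dx12)
   depends only on t = |v|_1 / |v|_2, which lies in [1, sqrt p1] because v is
   supported on the p1 selected coordinates (Cauchy-Schwarz).  As a function of t,
     h - 1 + a(1-a)(2-a)(1 - t^-2) = a(1-a)(1 - 1/t)(t + 2(1-a)/t),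
     1 + a(1-a)(t-1) - h = a(1-a)(1 - 1/t)(a(1 + 1/t) + 2(1-a)),
   and both right-hand sides are nonnegative for t >= 1.  The outer bounds are the
   maxima of a(1-a)(2-a) and a(1-a) on [0,1]. *)

From mathcomp Require Import all_boot all_order all_algebra.
From mathcomp Require Import reals ring lra.
Import Order.TTheory GRing.Theory Num.Theory.
Local Open Scope ring_scope.

Section Norms.
Context {R : realType} {n : nat}.
Implicit Types (v : 'cV[R]_n) (c : R).

Lemma norm1_ge0 v : 0 <= norm1 v.
Proof. exact: sumr_ge0. Qed.

Lemma norm2_sqr v : norm2 v ^+ 2 = \sum_i `|v i 0| ^+ 2.
Proof.
rewrite sqr_sqrtr; last by apply: sumr_ge0 => i _; exact: sqr_ge0.
by apply: eq_bigr => i _; rewrite real_normK ?num_real.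
Qed.

Lemma norm2_gt0 v i : v i 0 != 0 -> 0 < norm2 v.
Proof.
move=> vi0; rewrite sqrtr_gt0 (bigD1 i) //=.
have rest : 0 <= \sum_(j | j != i) v j 0 ^+ 2 by apply: sumr_ge0 => j _; exact: sqr_ge0.
have : 0 < v i 0 ^+ 2 by rewrite lt_def sqrf_eq0 vi0 sqr_ge0.
lra.
Qed.

Lemma norm1Z c v : norm1 (c *: v) = `|c| * norm1 v.
Proof. by rewrite /norm1 mulr_sumr; apply: eq_bigr => i _; rewrite mxE normrM. Qed.

Lemma norm1N v : norm1 (- v) = norm1 v.
Proof. by rewrite -scaleN1r norm1Z normrN1 mul1r. Qed.

Lemma norm2Z c v : norm2 (c *: v) = `|c| * norm2 v.
Proof.
rewrite /norm2 -sqrtr_sqr -sqrtrM ?sqr_ge0 // mulr_sumr.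
by congr Num.sqrt; apply: eq_bigr => i _; rewrite mxE exprMn.
Qed.

Lemma norm2N v : norm2 (- v) = norm2 v.
Proof. by rewrite -scaleN1r norm2Z normrN1 mul1r. Qed.

Lemma sum_sqr_le_sqr_sum (I : finType) (x : I -> R) :
  (forall i, 0 <= x i) -> \sum_i x i ^+ 2 <= (\sum_i x i) ^+ 2.
Proof.
move=> x0; rewrite [leRHS]expr2 mulr_sumr; apply: ler_sum => i _.
rewrite expr2 mulrC; apply: ler_wpM2r => //.
by rewrite (bigD1 i) //= lerDl; exact: sumr_ge0.
Qed.

Lemma norm2_le_norm1 v : norm2 v <= norm1 v.
Proof.
rewrite -ler_sqr ?nnegrE ?sqrtr_ge0 ?norm1_ge0 // norm2_sqr.
by apply: sum_sqr_le_sqr_sum => i; exact: normr_ge0.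
Qed.

Lemma sqr_sum_le_support (I : finType) (x s : I -> R) :
    (forall i, s i = 0 \/ s i = 1) -> (forall i, s i = 0 -> x i = 0) ->
  (\sum_i x i) ^+ 2 <= (\sum_i s i) * \sum_i x i ^+ 2.
Proof.
(* Cauchy-Schwarz for s and x, written as AM-GM on the products s_i x_j * s_j x_i. *)
move=> s01 supp.
have sx i : s i * x i = x i.
  by case: (s01 i) => si; rewrite si ?mul1r // mul0r supp.
have ss i : s i ^+ 2 = s i by case: (s01 i) => ->; rewrite ?expr0n ?expr1n.
have sqE : \sum_i \sum_j (s i * x j) ^+ 2 = (\sum_i s i) * \sum_i x i ^+ 2.
  rewrite mulr_suml; apply: eq_bigr => i _; rewrite mulr_sumr.
  by apply: eq_bigr => j _; rewrite exprMn ss.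
have prodE : \sum_i \sum_j (s i * x j) * (s j * x i) = (\sum_i x i) ^+ 2.
  rewrite expr2 mulr_suml; apply: eq_bigr => i _; rewrite mulr_sumr.
  apply: eq_bigr => j _.
  by transitivity ((s i * x i) * (s j * x j)); [ring | rewrite !sx].
have amgm : (\sum_i \sum_j (s i * x j) * (s j * x i)) *+ 2
    <= \sum_i \sum_j (s i * x j) ^+ 2 + \sum_i \sum_j (s j * x i) ^+ 2.
  rewrite -big_split -sumrMnl; apply: ler_sum => i _.
  rewrite -big_split -sumrMnl; apply: ler_sum => j _.
  exact: leif_mean_square_scaled.
rewrite prodE [X in _ + X]exchange_big /= sqE -mulr2n in amgm.
by rewrite -(ler_pMn2r (n := 2)).
Qed.

Lemma norm1_le_sqrt_support v (s : 'I_n -> R) :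
    (forall i, s i = 0 \/ s i = 1) -> (forall i, s i = 0 -> v i 0 = 0) ->
  norm1 v <= Num.sqrt (\sum_i s i) * norm2 v.
Proof.
move=> s01 supp.
have s0 : 0 <= \sum_i s i by apply: sumr_ge0 => i _; case: (s01 i) => ->.
rewrite -ler_sqr ?nnegrE ?norm1_ge0 ?mulr_ge0 ?sqrtr_ge0 //.
rewrite exprMn sqr_sqrtr // norm2_sqr; apply: sqr_sum_le_support => // i /supp->.
exact: normr0.
Qed.

Lemma max_entry_neq0 v m :
  v != 0 -> (forall i, `|v i 0| <= `|v m 0|) -> v m 0 != 0.
Proof.
move=> v0 vm; apply: contraNneq v0 => vm0; apply/eqP/matrixP => i j.
by rewrite ord1 mxE; apply/eqP; rewrite -normr_le0; have := vm i; rewrite vm0 normr0.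
Qed.

End Norms.

Section ElasticStep.
Context {R : realType} (alpha : R).
Hypotheses (alpha_ge0 : 0 <= alpha) (alpha_le1 : alpha <= 1).

Lemma mul_1subr_ge0 : 0 <= alpha * (1 - alpha).
Proof. by apply: mulr_ge0; rewrite ?subr_ge0. Qed.

Definition h_ratio (t : R) : R :=
  alpha * (alpha + (1 - alpha) * t) + (1 - alpha) * (alpha / t + (1 - alpha)) ^+ 2.

Lemma h_alpha_elastic n (v : 'cV[R]_n) : 0 < norm2 v ->
  h_alpha alpha (- ((alpha / norm1 v + (1 - alpha) / norm2 v) *: v))
  = h_ratio (norm1 v / norm2 v).
Proof.
move=> b0; have a0 : 0 < norm1 v := lt_le_trans b0 (norm2_le_norm1 v).
have c0 : 0 <= alpha / norm1 v + (1 - alpha) / norm2 v.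
  by apply: addr_ge0; apply: divr_ge0; rewrite ?subr_ge0 // ltW.
rewrite /h_alpha norm1N norm2N norm1Z norm2Z ger0_norm // /h_ratio.
by field; rewrite !gt_eqF.
Qed.

Lemma h_ratio_ge t : 1 <= t ->
  1 - alpha * (1 - alpha) * (2 - alpha) * (1 - t ^- 2) <= h_ratio t.
Proof.
move=> t1; have t0 : 0 < t := lt_le_trans ltr01 t1.
rewrite -subr_ge0.
have -> : h_ratio t - (1 - alpha * (1 - alpha) * (2 - alpha) * (1 - t ^- 2))
    = alpha * (1 - alpha) * ((1 - t^-1) * (t + 2 * (1 - alpha) * t^-1)).
  by rewrite /h_ratio; field; exact: lt0r_neq0.
have r1 : t^-1 <= 1 by rewrite invf_le1.
have r0 : 0 <= t^-1 by rewrite invr_ge0 ltW.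
apply: mulr_ge0; first exact: mul_1subr_ge0.
apply: mulr_ge0; first by rewrite subr_ge0.
apply: addr_ge0; first exact: ltW.
by rewrite !mulr_ge0 ?subr_ge0 ?ler0n.
Qed.

Lemma h_ratio_le t : 1 <= t -> h_ratio t <= 1 + alpha * (1 - alpha) * (t - 1).
Proof.
move=> t1; have t0 : 0 < t := lt_le_trans ltr01 t1.
rewrite -subr_ge0.
have -> : 1 + alpha * (1 - alpha) * (t - 1) - h_ratio t
    = alpha * (1 - alpha) * ((1 - t^-1) * (alpha * (1 + t^-1) + 2 * (1 - alpha))).
  by rewrite /h_ratio; field; exact: lt0r_neq0.
have r1 : t^-1 <= 1 by rewrite invf_le1.
have r0 : 0 <= t^-1 by rewrite invr_ge0 ltW.
apply: mulr_ge0; first exact: mul_1subr_ge0.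
apply: mulr_ge0; first by rewrite subr_ge0.
apply: addr_ge0; first by rewrite mulr_ge0 // addr_ge0.
by rewrite mulr_ge0 ?ler0n // subr_ge0.
Qed.

End ElasticStep.

Lemma elastic_lower_bound_gt (R : realType) (alpha w : R) :
  0 <= alpha <= 1 -> 0 <= w <= 1 ->
  61 / 100 < 1 - alpha * (1 - alpha) * (2 - alpha) * (1 - w).
Proof.
move=> /andP[a0 a1] /andP[w0 w1].
(* With u = 1 - alpha the cubic is u - u^3, whose maximum 2 / (3 sqrt 3) < 0.385
   is attained at u = 1 / sqrt 3 ~ 0.577. *)
have sos : 0 <= ((1 - alpha) - 577/1000) ^+ 2 * ((1 - alpha) + 1154/1000).
  by apply: mulr_ge0; [exact: sqr_ge0 | lra].
have : 0 <= alpha * (1 - alpha) * (2 - alpha) by apply: mulr_ge0; nra.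
nra.
Qed.

Lemma elastic_upper_bound_le (R : realType) (alpha s : R) :
  1 <= s -> 1 + alpha * (1 - alpha) * (s - 1) <= 1 + (s - 1) / 4.
Proof.
move=> s1; have : 0 <= (alpha - 1/2) ^+ 2 * (s - 1).
  by apply: mulr_ge0; [exact: sqr_ge0 | lra].
nra.
Qed.

Section SelectionMatrix.
Context {R : realType} {p : nat} (alpha : R) (g : 'cV[R]_p) (m : 'I_p).

Lemma I12_diag01 d : I12 alpha g m d d = 0 \/ I12 alpha g m d d = 1.
Proof. by rewrite /I12 !mxE eqxx mulr1n; case: ifP; auto. Qed.

Lemma I12_mulE d : (I12 alpha g m *m g) d 0 = I12 alpha g m d d * g d 0.
Proof. by rewrite /I12 mul_diag_mx !mxE eqxx mulr1n. Qed.

Lemma I12_max : alpha <= 1 -> I12 alpha g m m m = 1.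
Proof. by move=> a1; rewrite /I12 !mxE eqxx mulr1n ler_piMl. Qed.

Lemma p1_ge1 : alpha <= 1 -> 1 <= p1 alpha g m.
Proof.
move=> a1; rewrite /p1 (bigD1 m) //= I12_max // lerDl.
by apply: sumr_ge0 => d _; case: (I12_diag01 d) => ->.
Qed.

End SelectionMatrix.

Theorem theorem2 (R : realType) (p : nat) (hp : (1 <= p)%N)
  (alpha : R) (ha0 : 0 <= alpha) (ha1 : alpha <= 1)
  (g : 'cV[R]_p) (hg : g != 0)
  (m : 'I_p) (hm : forall d : 'I_p, `|g d 0| <= `|g m 0|) :
  let q := p1 alpha g m in
  let h := h_alpha alpha (dx12 alpha g m) in
  61 / 100 < 1 - alpha * (1 - alpha) * (2 - alpha) * (1 - q^-1)
  /\ 1 - alpha * (1 - alpha) * (2 - alpha) * (1 - q^-1) <= h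
  /\ h <= 1 + alpha * (1 - alpha) * (Num.sqrt q - 1)
  /\ 1 + alpha * (1 - alpha) * (Num.sqrt q - 1) <= 1 + (Num.sqrt q - 1) / 4.
Proof.
move=> q h.
set v := I12 alpha g m *m g.
have v0 : 0 < norm2 v.
  by apply: (@norm2_gt0 _ _ v m); rewrite I12_mulE I12_max // mul1r max_entry_neq0.
have q1 : 1 <= q by exact: p1_ge1.
have q0 : 0 < q := lt_le_trans ltr01 q1.
have sq1 : 1 <= Num.sqrt q by rewrite -sqrtr1 ler_sqrt // ltW.
set t := norm1 v / norm2 v.
have t1 : 1 <= t by rewrite ler_pdivlMr // mul1r norm2_le_norm1.
have tq : t <= Num.sqrt q.
  rewrite ler_pdivrMr //; apply: norm1_le_sqrt_support => [d | d]; first exact: I12_diag01.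
  by rewrite I12_mulE => ->; rewrite mul0r.
have -> : h = h_ratio alpha t by exact: h_alpha_elastic.
have t2q : t ^+ 2 <= q.
  by rewrite -(sqr_sqrtr (ltW q0)) ler_sqr ?nnegrE ?sqrtr_ge0 ?(le_trans ler01).
split; last split; last split.
- apply: elastic_lower_bound_gt; first by rewrite ha0.
  by rewrite invr_ge0 ltW //= invf_le1.
- apply: le_trans _ (h_ratio_ge _ ha0 ha1 _ t1); rewrite lerD2l lerN2.
  apply: ler_wpM2l; first by rewrite mulr_ge0 ?mul_1subr_ge0 // subr_ge0 (le_trans ha1) ?ler1n.
  by rewrite lerD2l lerN2 lef_pV2 ?posrE ?exprn_gt0 // (lt_le_trans ltr01).
- apply: le_trans (h_ratio_le _ ha0 ha1 _ t1) _; rewrite lerD2l.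
  by apply: ler_wpM2l; [exact: mul_1subr_ge0 | rewrite lerD2r].
- exact: elastic_upper_bound_le.
Qed.
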